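(* Consider a classification task in which the unlabeled graph $\overline G$ has support $\overline{\mathcal G}$ equal to all graphs on $n\in\mathbb N$ vertices, the edges of $\overline G$ are jointly independent, and $\mathbf X\in\mathcal Z^{n\times d}$ for a finite set $\mathcal Z$. Fix a subgraph $g_{exp}$ and let the label be $Y=\mathds 1(g_{exp}\subseteq\overline G)$ (a deterministic task). Let $f(\overline G)$ be the classifier that outputs label $\mathds 1(g_{exp}\subseteq\overline G)$ with probability one. For $p\in[0,1]$, let $\Psi_p$ be the (stochastic) explanation function with $P(\Psi_p(\overline g)=g_{exp}\mid g_{exp}\subseteq\overline g)=p$ and $P(\Psi_p(\overline g)=\phi\mid g_{exp}\subseteq\overline g)=1-p$, where $\phi$ is the empty graph, and let $\mathcal S=\{\Psi_p:p\in[0,1]\}$. Then the fidelity measure $Fid_\Delta$ is well-behaved for $\{f\}$ and $\mathcal S$.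
   Context: Graph data: a random labeled graph $G=(\mathcal V,\mathcal E;Y,\mathbf X,\mathbf A)$ with unlabeled version $\overline G$. A classifier $f$ maps an unlabeled graph to a distribution on labels; $\widehat Y\sim f(\overline G)$. An explanation function $\Psi$ maps $\overline G$ to a subgraph $\Psi(\overline G)$ of it. For an explanation function $\Psi$, $$I(\widehat Y;\overline G\mid\mathds 1_{\Psi(\overline G)})\triangleq\sum_{g'}P_{\Psi(\overline G)}(g')\sum_{y,\overline g}P_{\widehat Y,\overline G}(y,\overline g|g'\subseteq\overline G)\log\frac{P_{\widehat Y,\overline G}(y,\overline g|g'\subseteq\overline G)}{P_{\widehat Y}(y|g'\subseteq\overline G)P_{\overline G}(\overline g|g'\subseteq\overline G)}.$$ Fidelity measures: let $\widehat P(\cdot)$ be the distribution $f(\overline G)$, $\widehat P^+(\cdot)$ the distribution $f(\overline G-\Psi(\overline G))$ where $\overline G-\Psi(\overline G)$ is the subgraph with edge set $\mathcal E\setminus\mathcal E_{exp}$, and $\widehat P^-(\cdot)$ the distribution $f(\Psi(\overline G))$. Define $Fid_+=\mathbb E[\widehat P(Y)-\widehat P^+(Y)]$, $Fid_-=\mathbb E[\widehat P(Y)-\widehat P^-(Y)]$, $Fid_\Delta=Fid_+-Fid_-$ (expectation over $(\overline G,Y)$ and randomness of $\Psi$). A fidelity measure $Fid(f,\Psi)$ is well-behaved for a set of classifiers $\mathcal F$ and explanation functions $\mathcal S$ if for all $f\in\mathcal F$ and $\Psi_1,\Psi_2\in\mathcal S$: $I(\widehat Y;\overline G|\mathds 1_{\Psi_1(\overline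 G)})\le I(\widehat Y;\overline G|\mathds 1_{\Psi_2(\overline G)})$ if and only if $Fid(f,\Psi_2)\le Fid(f,\Psi_1)$. *)

From HB Require Import structures.
From mathcomp Require Import all_boot all_order all_algebra.
From mathcomp Require Import reals exp.

Set Implicit Arguments.
Unset Strict Implicit.
Unset Printing Implicit Defensive.

Import Order.TTheory GRing.Theory Num.Theory.
Local Open Scope ring_scope.

(** Potential edges of a simple undirected graph on vertex set 'I_n:
    unordered pairs {i,j}, encoded as (i,j) with i < j. *)
Definition edge (n : nat) : finType := {e : 'I_n * 'I_n | (e.1 < e.2)%N}.

(** An unlabeled graph on n vertices with node features in Z^{n x d}:
    its edge set together with its feature matrix.  The adjacency matrix
    is determined by the edge set. *)
Definition ugraph (n d : nat) (Z : finType) : finType :=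
  ({set edge n} * 'M[Z]_(n, d))%type.

(** A subgraph of [h] is described by its edge set [S] (a subset of the
    edges of [h]); it keeps the vertex set and node features of [h]. *)
Definition subg n d Z (h : ugraph n d Z) (S : {set edge n}) : ugraph n d Z :=
  (S, h.2).

Definition remg n d Z (h : ugraph n d Z) (S : {set edge n}) : ugraph n d Z :=
  (h.1 :\: S, h.2).

Definition is_pmf (R : realType) (T : finType) (P : T -> R) : Prop :=
  (forall t, 0 <= P t) /\ \sum_t P t = 1.

Section Info.
Variables (R : realType) (n d : nat) (Z : finType).
Local Notation G := (ugraph n d Z).
Local Notation ES := {set edge n}.

(** Classifiers: [f h] is a distribution on labels (bool).
    Explanation functions: [K h] is a distribution on subgraphs (edge sets)
    of [h].  [P] is the distribution of the unlabeled graph Gbar. *)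

Definition PPsi (P : G -> R) (K : G -> ES -> R) (S : ES) : R :=
  \sum_(h : G) P h * K h S.

Definition Pev (P : G -> R) (S : ES) : R := \sum_(h : G | S \subset h.1) P h.

Definition Pc (P : G -> R) (f : G -> bool -> R) (S : ES) (y : bool) (h : G) : R :=
  if S \subset h.1 then P h * f h y / Pev P S else 0.

Definition PcY P f S (y : bool) : R := \sum_h Pc P f S y h.
Definition PcG P f S (h : G) : R := \sum_y Pc P f S y h.

(** I(Yhat ; Gbar | 1_{Psi(Gbar)}) *)
Definition cmi (P : G -> R) (f : G -> bool -> R) (K : G -> ES -> R) : R :=
  \sum_S PPsi P K S *
    \sum_y \sum_h Pc P f S y h *
        ln (Pc P f S y h / (PcY P f S y * PcG P f S h)).

(** Fidelities; [pY h y] = P(Y = y | Gbar = h) is the label distribution. *)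
Definition Fid_plus (P : G -> R) (pY : G -> bool -> R)
    (f : G -> bool -> R) (K : G -> ES -> R) : R :=
  \sum_(h : G) \sum_y P h * pY h y *
     \sum_S K h S * (f h y - f (remg h S) y).

Definition Fid_minus (P : G -> R) (pY : G -> bool -> R)
    (f : G -> bool -> R) (K : G -> ES -> R) : R :=
  \sum_(h : G) \sum_y P h * pY h y *
     \sum_S K h S * (f h y - f (subg h S) y).

Definition Fid_delta P pY f K : R := Fid_plus P pY f K - Fid_minus P pY f K.

Definition well_behaved
    (Fid : (G -> bool -> R) -> (G -> ES -> R) -> R)
    (I : (G -> bool -> R) -> (G -> ES -> R) -> R)
    (F : (G -> bool -> R) -> Prop) (S : (G -> ES -> R) -> Prop) : Prop :=
  forall f Psi1 Psi2, F f -> S Psi1 -> S Psi2 ->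
    (I f Psi1 <= I f Psi2 <-> Fid f Psi2 <= Fid f Psi1).

Definition edges_indep (P : G -> R) : Prop :=
  forall T : ES, \sum_(h : G | T \subset h.1) P h =
                 \prod_(e in T) \sum_(h : G | e \in h.1) P h.

Definition full_support (P : G -> R) : Prop :=
  forall S : ES, 0 < \sum_(h : G | h.1 == S) P h.

Definition expl_ok (K : G -> ES -> R) : Prop :=
  forall h, is_pmf (K h) /\ (forall S : ES, ~~ (S \subset h.1) -> K h S = 0).

Definition lab_exp (gexp : ES) (h : G) : bool := gexp \subset h.1.

Definition f_exp (gexp : ES) : G -> bool -> R :=
  fun h y => (y == lab_exp gexp h)%:R.

(** Psi_p: on graphs containing g_exp, outputs g_exp w.p. p and the empty
    graph w.p. 1-p; on other graphs it follows a fixed (p-independent)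
    explanation [psi0]. *)
Definition Psi_p (gexp : ES) (psi0 : G -> ES -> R) (p : R) : G -> ES -> R :=
  fun h S => if gexp \subset h.1
             then p * (S == gexp)%:R + (1 - p) * (S == set0)%:R
             else psi0 h S.

End Info.

From HB Require Import structures.
From mathcomp Require Import all_boot all_order all_algebra.
From mathcomp Require Import reals exp ring lra.
Import Order.TTheory GRing.Theory Num.Theory.
Local Open Scope ring_scope.
Set Implicit Arguments. Unset Strict Implicit. Unset Printing Implicit Defensive.

(* Both I(Yhat; Gbar | 1_Psi) and Fid_Delta are expectations, over Gbar and
   its explanation S = Psi(Gbar), of a weight w(Gbar, S).  Since Psi_p mixes
   g_exp and the empty graph with weights p and 1 - p on the graphs containing
   g_exp, both are affine in p, with slope E[w(Gbar, g_exp) - w(Gbar, empty);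
   g_exp \subseteq Gbar].  The classifier being deterministic, the weight of
   the information is the entropy of the label given S \subseteq Gbar: it is
   0 for S = g_exp and the binary entropy of a = P(g_exp \subseteq Gbar) for
   S = empty, positive because full support gives 0 < a < 1 when g_exp is
   nonempty.  The weight difference for Fid_Delta is 2.  Slopes of opposite
   signs (both zero when g_exp is empty) give the equivalence. *)

Lemma sum_pred1_mull (S : pzSemiRingType) (T : finType) (a : T) (F : T -> S) :
  \sum_(t : T) (t == a)%:R * F t = F a.
Proof.
rewrite (eq_bigr (fun t => if t == a then F t else 0)) -?big_mkcond ?big_pred1_eq //.
by move=> t _; case: eqP; rewrite ?mul1r ?mul0r.
Qed.

(* [ln] vanishes off the positive reals, so no sign condition is needed. *)
Lemma ln_inv (R : realType) (x : R) : ln x^-1 = - ln x.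
Proof.
have [x_gt0|x_le0] := ltP 0 x; first by rewrite lnV.
by rewrite !ln0 ?oppr0 // invr_le0.
Qed.

Lemma binary_entropy_gt0 (R : realType) (a : R) :
  0 < a < 1 -> 0 < - (a * ln a + (1 - a) * ln (1 - a)).
Proof.
move=> /andP[a_gt0 a_lt1].
have lna : ln a < 0 by rewrite ln_lt0 ?a_gt0.
have lnb : ln (1 - a) < 0 by rewrite ln_lt0 // subr_gt0 a_lt1 ltrBlDr ltrDl.
by rewrite oppr_gt0 -(addr0 0) ltrD // pmulr_rlt0 // subr_gt0.
Qed.

Lemma le_sub_opposite_slopes (R : realFieldType) (x1 x2 y1 y2 t k l : R) :
  x1 - x2 = t * k -> y1 - y2 = t * l ->
  (k = 0 /\ l = 0) \/ (k < 0 /\ 0 < l) -> (x1 <= x2 <-> y2 <= y1).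
Proof.
move=> ex ey [[k0 l0]|[k_lt0 l_gt0]]; last by split=> le; nra.
move: ex ey; rewrite k0 l0 !mulr0 => /subr0_eq -> /subr0_eq ->.
by rewrite !lexx.
Qed.

Section Expectations.
Variables (R : realType) (n d : nat) (Z : finType).
Local Notation G := (ugraph n d Z).
Local Notation ES := {set edge n}.

Definition cmi_term (P : G -> R) (f : G -> bool -> R) (S : ES) : R :=
  \sum_y \sum_h Pc P f S y h * ln (Pc P f S y h / (PcY P f S y * PcG P f S h)).

Lemma cmiE P f K : cmi P f K = \sum_h \sum_S P h * K h S * cmi_term P f S.
Proof.
rewrite /cmi exchange_big /=; apply: eq_bigr => S _.
by rewrite /PPsi mulr_suml.
Qed.

Definition fid_weight (pY f : G -> bool -> R) (h : G) (S : ES) : R :=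
  \sum_y pY h y * ((f h y - f (remg h S) y) - (f h y - f (subg h S) y)).

Lemma Fid_deltaE P pY f K :
  Fid_delta P pY f K = \sum_h \sum_S P h * K h S * fid_weight pY f h S.
Proof.
rewrite /Fid_delta /Fid_plus /Fid_minus -sumrB; apply: eq_bigr => h _.
rewrite -sumrB /fid_weight.
under eq_bigr do rewrite -mulrBr -sumrB mulr_sumr.
rewrite exchange_big /=; apply: eq_bigr => S _.
by rewrite mulr_sumr; apply: eq_bigr => y _; ring.
Qed.

Lemma Psi_p_expectB (P : G -> R) (W : G -> ES -> R) gexp psi0 (p1 p2 : R) :
  \sum_h \sum_S P h * Psi_p gexp psi0 p1 h S * W h S -
  \sum_h \sum_S P h * Psi_p gexp psi0 p2 h S * W h S =
  (p1 - p2) * \sum_(h : G | gexp \subset h.1) P h * (W h gexp - W h set0).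
Proof.
rewrite -sumrB mulr_sumr [RHS]big_mkcond /=; apply: eq_bigr => h _.
rewrite -sumrB /Psi_p; case: ifP => _; last first.
  by rewrite big1 ?mulr0 // => S _; rewrite subrr.
rewrite (eq_bigr (fun S => (p1 - p2) * P h * ((S == gexp)%:R * W h S) -
                           (p1 - p2) * P h * ((S == set0)%:R * W h S))).
  by rewrite sumrB -!mulr_sumr !sum_pred1_mull; ring.
by move=> S _; ring.
Qed.

End Expectations.

Section ExplanationTask.
Variables (R : realType) (n d : nat) (Z : finType).
Local Notation G := (ugraph n d Z).
Local Notation ES := {set edge n}.
Variables (P : G -> R) (gexp : ES).
Local Notation f := (@f_exp R n d Z gexp).
Local Notation lab := (lab_exp gexp).

Lemma Pc_f_exp_eq0 S y h : y != lab h -> Pc P f S y h = 0.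
Proof. by rewrite /Pc /f_exp => /negbTE ->; rewrite mulr0 mul0r if_same. Qed.

Lemma PcG_f_exp S h : PcG P f S h = Pc P f S (lab h) h.
Proof.
by rewrite /PcG (bigD1 (lab h)) //= big1 ?addr0 // => y /Pc_f_exp_eq0.
Qed.

Lemma cmi_term_f_exp S :
  cmi_term P f S = - \sum_y PcY P f S y * ln (PcY P f S y).
Proof.
rewrite /cmi_term -sumrN; apply: eq_bigr => y _.
rewrite /PcY mulr_suml -sumrN; apply: eq_bigr => h _.
have [->|Pc_neq0] := eqVneq (Pc P f S y h) 0; first by rewrite !mul0r oppr0.
have yE : y = lab h by apply/eqP; apply: contraNT Pc_neq0 => /Pc_f_exp_eq0 ->.
by rewrite PcG_f_exp -yE invfM mulrCA divff // mulr1 ln_inv mulrN.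
Qed.

Lemma fid_weight_f_exp_gexp_set0 (h : G) : gexp \subset h.1 ->
  fid_weight f f h gexp - fid_weight f f h set0 = 2 * (gexp != set0)%:R.
Proof.
move=> sub_h; rewrite /fid_weight !big_bool /f_exp /lab_exp /= sub_h /= setD0 sub_h.
rewrite subxx subset0 /=.
have -> : (gexp \subset h.1 :\: gexp) = (gexp == set0).
  apply/idP/idP => [sub_hD|/eqP->]; last exact: sub0set.
  rewrite -subset0; apply/subsetP => e e_gexp.
  by move: (subsetP sub_hD e e_gexp); rewrite in_setD e_gexp.
by case: (gexp == set0) => /=; ring.
Qed.

Lemma fid_slope_f_exp :
  \sum_(h : G | gexp \subset h.1) P h * (fid_weight f f h gexp - fid_weight f f h set0) =
  Pev P gexp * (2 * (gexp != set0)%:R).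
Proof. by rewrite /Pev mulr_suml; apply: eq_bigr => h /fid_weight_f_exp_gexp_set0 ->. Qed.

Hypotheses (hP : is_pmf P) (hsupp : full_support P).

Lemma Pev_gt0 S : 0 < Pev P S.
Proof.
apply: (lt_le_trans (hsupp S)); rewrite /Pev big_mkcond [X in _ <= X]big_mkcond /=.
apply: ler_sum => h _; case: eqP => [->|_]; first by rewrite subxx.
by case: ifP => // _; case: hP.
Qed.

Lemma Pev_set0 : Pev P set0 = 1.
Proof. by case: hP => _ <-; apply: eq_bigl => h; rewrite sub0set. Qed.

Lemma Pev_lt1 S : S != set0 -> Pev P S < 1.
Proof.
move=> S_neq0; rewrite -subr_gt0.
have -> : 1 - Pev P S = \sum_(h : G | ~~ (S \subset h.1)) P h.
  by case: hP => _ <-; rewrite (bigID (fun h : G => S \subset h.1)) /= addrC addrK.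
apply: (lt_le_trans (hsupp set0)); rewrite big_mkcond [X in _ <= X]big_mkcond /=.
apply: ler_sum => h _; case: eqP => [->|_].
  by rewrite subset0 (negbTE S_neq0).
by case: ifP => // _; case: hP.
Qed.

Lemma PcY_f_exp_gexp y : PcY P f gexp y = y%:R.
Proof.
rewrite /PcY /Pc /f_exp /lab_exp -big_mkcond /=.
under eq_bigr => h sub_h do rewrite sub_h eqb_id.
by rewrite -!mulr_suml mulrAC divff ?mul1r // gt_eqF ?Pev_gt0.
Qed.

Lemma PcY_f_exp_set0 y :
  PcY P f set0 y = if y then Pev P gexp else 1 - Pev P gexp.
Proof.
have Pc_set0 b h : Pc P f set0 b h = P h * f h b by rewrite /Pc sub0set Pev_set0 divr1.
rewrite /PcY; under eq_bigr do rewrite Pc_set0.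
rewrite /Pev; case: y; last (case: hP => _ <-; rewrite [X in _ - X]big_mkcond -sumrB).
  rewrite [RHS]big_mkcond; apply: eq_bigr => h _.
  by rewrite /f_exp /lab_exp; case: ifP; rewrite ?mulr1 ?mulr0.
apply: eq_bigr => h _.
by rewrite /f_exp /lab_exp; case: ifP; rewrite /= ?mulr1 ?mulr0 ?subr0 ?subrr.
Qed.

Lemma cmi_term_f_exp_gexp : cmi_term P f gexp = 0.
Proof.
by rewrite cmi_term_f_exp big_bool /= !PcY_f_exp_gexp ln1 mulr0 mul0r addr0 oppr0.
Qed.

Lemma cmi_term_f_exp_set0 : cmi_term P f set0 =
  - (Pev P gexp * ln (Pev P gexp) + (1 - Pev P gexp) * ln (1 - Pev P gexp)).
Proof. by rewrite cmi_term_f_exp big_bool /= !PcY_f_exp_set0. Qed.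

Lemma cmi_slope_f_exp :
  \sum_(h : G | gexp \subset h.1) P h * (cmi_term P f gexp - cmi_term P f set0) =
  Pev P gexp * (Pev P gexp * ln (Pev P gexp) + (1 - Pev P gexp) * ln (1 - Pev P gexp)).
Proof. by rewrite cmi_term_f_exp_gexp cmi_term_f_exp_set0 sub0r opprK -mulr_suml. Qed.

End ExplanationTask.

Theorem proposition3 (R : realType) (n d : nat) (Z : finType)
  (P : ugraph n d Z -> R)
  (hP : is_pmf P) (hind : edges_indep P) (hsupp : full_support P)
  (gexp : {set edge n})
  (psi0 : ugraph n d Z -> {set edge n} -> R) (hpsi0 : expl_ok psi0) :
  well_behaved (Fid_delta P (@f_exp R n d Z gexp)) (cmi P)
    (fun f => f = @f_exp R n d Z gexp)
    (fun Psi => exists p : R, 0 <= p <= 1 /\ Psi = Psi_p gexp psi0 p).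
Proof.
move=> _ K1 K2 -> [p1 [_ ->]] [p2 [_ ->]].
rewrite !cmiE !Fid_deltaE.
apply: (le_sub_opposite_slopes (Psi_p_expectB _ _ _ _ p1 p2) (Psi_p_expectB _ _ _ _ p1 p2)).
rewrite cmi_slope_f_exp // fid_slope_f_exp.
have [->|gexp_neq0] := eqVneq gexp set0.
  by left; rewrite Pev_set0 // subrr ln1 !mulr0 mul0r addr0 mulr0.
right; have a_gt0 := Pev_gt0 hP hsupp gexp.
split; last by rewrite /= mulr1 mulr_gt0.
rewrite pmulr_rlt0 // -oppr_gt0 binary_entropy_gt0 // a_gt0.
exact: Pev_lt1.
Qed.
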